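(* Let $n\geq 2$ and let $R$ be the unital associative ring $\langle x,y \mid x^n=0,\ y^n=0,\ xy+y^{n-1}x^{n-1}=1\rangle$. For $0\leq i,j<n$ put $a_{i,j}=y^ix^j-y^{i+1}x^{j+1}\in R$, and set $a_{i,j}=0$ whenever $i$ or $j$ lies outside $\{0,1,\dots,n-1\}$. Then for all $0\leq i,j<n$: $$a_{i,j}x=a_{i,j+1},\qquad a_{i,j}y=a_{i,j-1},\qquad xa_{i,j}=a_{i-1,j},\qquad ya_{i,j}=a_{i+1,j}.$$
   Context: $R$ denotes the quotient of the free unital associative ring $\mathbb{Z}\langle x,y\rangle$ by the two-sided ideal generated by $x^n$, $y^n$ and $xy+y^{n-1}x^{n-1}-1$; $x^0=y^0=1$. *)

From mathcomp Require Import all_boot all_order all_algebra.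
Set Implicit Arguments. Unset Strict Implicit. Unset Printing Implicit Defensive.
Import Order.TTheory GRing.Theory Num.Theory.
Local Open Scope ring_scope.

(* a_{i,j} = y^i x^j - y^(i+1) x^(j+1) for 0 <= i,j < n, and 0 otherwise.
   Indices are integers so that i-1, j-1 may be -1. *)
Definition acoef (R : pzRingType) (n : nat) (x y : R) (i j : int) : R :=
  if [&& (0 <= i)%R, (i < n%:Z)%R, (0 <= j)%R & (j < n%:Z)%R]
  then y ^+ `|i|%N * x ^+ `|j|%N - y ^+ (`|i|%N.+1) * x ^+ (`|j|%N.+1)
  else 0.

From mathcomp Require Import all_boot all_order all_algebra.
Import GRing.Theory.
Local Open Scope ring_scope.

(* With e := 1 - y x one has a_{i,j} = y^i e x^j.  Multiplying the defining
   relation on the left by y and using y^n = 0 gives y x y = y, i.e. e y = 0.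
   Right multiplication by x raises j, and kills a_{i,n-1} since x^n = 0.
   Right multiplication by y lowers j because x y = 1 - y^(n-1) x^(n-1) and
   e x^k y^j = 0 for k < j, k < n - 1 (induction on k, using the same
   expansion of x y).  The identities for left multiplication are the same
   identities in the opposite ring with x and y exchanged, where a_{i,j}
   becomes a_{j,i}. *)

Lemma acoef_natE (R : pzRingType) n (x y : R) (i j : nat) :
  acoef n x y i j =
    if (i < n)%N && (j < n)%N then y ^+ i * (1 - y * x) * x ^+ j else 0.
Proof.
rewrite /acoef !ltz_nat !absz_nat !le0z_nat /=; case: ifP => // _.
by rewrite mulrBr mulr1 mulrBl [y ^+ i.+1]exprSr [x ^+ j.+1]exprS !mulrA.
Qed.

Lemma acoefNr (R : pzRingType) n (x y : R) (i : int) : acoef n x y i (-1) = 0.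
Proof. by rewrite /acoef; case: (0 <= i); case: (i < n%:Z). Qed.

Lemma acoef_converse (R : pzRingType) n (x y : R) (i j : int) :
  acoef n (y : R^c) (x : R^c) i j = acoef n x y j i.
Proof. by rewrite /acoef !revrX [in LHS]andbA andbC -andbA. Qed.

Section RightMultiplication.

Context {R : pzRingType} {m : nat} {x y : R}.
Hypotheses (xn : x ^+ m.+1 = 0) (yn : y ^+ m.+1 = 0).
Hypothesis relation : x * y + y ^+ m * x ^+ m = 1.

Local Notation e := (1 - y * x).
Local Notation a := (acoef m.+1 x y).

Lemma mulr_yxy : y * x * y = y.
Proof.
have := congr1 (GRing.mul y) relation.
by rewrite mulrDr mulr1 !mulrA -exprS yn mul0r addr0.
Qed.

Lemma mulr_xy : x * y = 1 - y ^+ m * x ^+ m.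
Proof. by rewrite -relation addrK. Qed.

Lemma mul_e_y : e * y = 0.
Proof. by rewrite mulrBl mul1r mulr_yxy subrr. Qed.

Lemma mul_e_XY (k j : nat) :
  (k < j)%N -> (k < m)%N -> e * x ^+ k * y ^+ j = 0.
Proof.
elim: k j => [|k IH] [|j] // ltkj /ltnW ltkm.
  by rewrite mulr1 exprS mulrA mul_e_y mul0r.
rewrite exprSr exprS !mulrA -(mulrA _ x y) mulr_xy.
by rewrite mulrBr mulr1 mulrBl !mulrA (IH j) // (IH m) // !mul0r subrr.
Qed.

Lemma acoef_mulX (i j : nat) : (i < m.+1)%N -> (j < m.+1)%N ->
  a i j * x = a i (j%:Z + 1).
Proof.
move=> lti ltj; rewrite addrC -intS !acoef_natE lti ltj /= -mulrA -exprSr.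
case: ltnP => // lemj; have -> : j.+1 = m.+1 by apply/eqP; rewrite eqn_leq ltj.
by rewrite xn !mulr0.
Qed.

Lemma acoef_mulY (i j : nat) : (i < m.+1)%N -> (j < m.+1)%N ->
  a i j * y = a i (j%:Z - 1).
Proof.
move=> lti; case: j => [|k] ltj.
  by rewrite acoefNr acoef_natE lti ltj mulr1 -mulrA mul_e_y mulr0.
have -> : k.+1%:Z - 1 = k by rewrite -addn1 PoszD addrK.
rewrite !acoef_natE lti ltj (ltnW ltj) /=.
rewrite exprSr -!mulrA mulr_xy mulrBr mulr1 mulrBr.
by rewrite !mulrA (mul_e_XY k m ltj ltj) mul0r subr0 mulrA.
Qed.

End RightMultiplication.

Theorem lemma3 (R : pzRingType) (n : nat) (x y : R) :
  (2 <= n)%N ->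
  x ^+ n = 0 -> y ^+ n = 0 -> x * y + y ^+ (n - 1) * x ^+ (n - 1) = 1 ->
  forall i j : nat, (i < n)%N -> (j < n)%N ->
    [/\ acoef n x y i j * x = acoef n x y i (j%:Z + 1),
        acoef n x y i j * y = acoef n x y i (j%:Z - 1),
        x * acoef n x y i j = acoef n x y (i%:Z - 1) j
      & y * acoef n x y i j = acoef n x y (i%:Z + 1) j].
Proof.
case: n => [//|m] _ xn yn; rewrite subn1 /= => rel i j lti ltj.
have xnc : (x : R^c) ^+ m.+1 = 0 by rewrite revrX.
have ync : (y : R^c) ^+ m.+1 = 0 by rewrite revrX.
have relc : (y : R^c) * x + (x : R^c) ^+ m * (y : R^c) ^+ m = 1.
  by rewrite !revrX.
split; [exact: acoef_mulX | exact: acoef_mulY | |].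
- have := acoef_mulY (R := R^c) xnc relc j i ltj lti.
  by rewrite !acoef_converse.
- have := acoef_mulX (R := R^c) (y := x) ync j i ltj lti.
  by rewrite !acoef_converse.
Qed.
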